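(* For every $n\ge1$, the Möbius function of the priority lattice $\Pi(n)$ satisfies $\mu(\hat0,\hat1)=0$.
   Context: $[n]_0=\{0,\dots,n\}$. A priority forest on $[n]_0$ is a rooted forest with vertex set $[n]_0$ whose component trees $T_0,T_1,\dots$ are increasing (each non-root vertex has a larger label than its parent) and satisfy: for $j<k$ every label of $T_j$ is smaller than every label of $T_k$. The priority lattice $\Pi(n)$ is the set of priority forests on $[n]_0$ ordered by inclusion of edge sets, together with an extra element $\hat1$ declared greater than every priority forest; $\hat0$ is the edgeless forest. *)

From mathcomp Require Import all_boot all_order all_algebra.
Set Implicit Arguments. Unset Strict Implicit. Unset Printing Implicit Defensive.
Import GRing.Theory.
Local Open Scope ring_scope.

(** Defined by the standard recursion
      mu(x,x) = 1,  mu(x,y) = - sum_{x <= z < y} mu(x,z) for x < y,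
      mu(x,y) = 0 otherwise,
    computed with fuel; fuel #|T|.+1 exceeds the length of every chain. *)
Fixpoint mobius_fuel (T : finType) (P : pred T) (le : rel T) (k : nat)
    (x y : T) : int :=
  match k with
  | 0%N => 0
  | k'.+1 =>
      if x == y then 1
      else if le x y then
        - \sum_(z : T | [&& P z, le x z, le z y & z != y])
            mobius_fuel P le k' x z
      else 0
  end.

Definition mobius (T : finType) (P : pred T) (le : rel T) (x y : T) : int :=
  mobius_fuel P le #|T|.+1 x y.

(** Vertices [n]_0 = {0,...,n} are 'I_n.+1.  A forest is given by its edge set,
    each edge stored as the pair (parent, child). *)
Definition vtx (n : nat) := 'I_n.+1.
Definition edgeset (n : nat) := {set (vtx n * vtx n)}.

Definition adj n (E : edgeset n) : rel (vtx n) :=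
  fun x y => ((x, y) \in E) || ((y, x) \in E).
Definition same_comp n (E : edgeset n) : rel (vtx n) := connect (adj E).

(** E is the edge set of a rooted forest all of whose trees are increasing:
    every vertex has at most one parent, and each parent has a smaller label
    than its child (such a graph is acyclic; roots are the parentless vertices,
    i.e. the minima of the trees). *)
Definition increasing_forest n (E : edgeset n) : bool :=
  [forall p : vtx n, forall c : vtx n, ((p, c) \in E) ==> (p < c)%N] &&
  [forall p : vtx n, forall p' : vtx n, forall c : vtx n,
     ((p, c) \in E) && ((p', c) \in E) ==> (p == p')].

(** Priority condition: the trees can be listed T_0, T_1, ... so that all labels
    of T_j are smaller than all labels of T_k for j < k; i.e. for any two distinct
    components, all labels of one are smaller than all labels of the other. *)
Definition priority_cond n (E : edgeset n) : bool :=
  [forall u : vtx n, forall v : vtx n, forall u' : vtx n, forall v' : vtx n,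
     [&& ~~ same_comp E u v, same_comp E u u', same_comp E v v' & (u < v)%N]
       ==> (u' < v')%N].

Definition priority_forest n (E : edgeset n) : bool :=
  increasing_forest E && priority_cond E.

(** The priority lattice Pi(n): carrier type option (edgeset n), where
    [Some E] is the priority forest with edge set E and [None] is the extra
    top element 1^. *)
Definition Pi_elem n : pred (option (edgeset n)) :=
  fun a => match a with None => true | Some E => priority_forest E end.

Definition Pi_le n : rel (option (edgeset n)) :=
  fun a b => match b with
             | None => true
             | Some F => match a with None => false | Some E => E \subset F end
             end.

Definition Pi_bot n : option (edgeset n) := Some set0.
Definition Pi_top n : option (edgeset n) := None.

From mathcomp Require Import all_boot all_order all_algebra.
From mathcomp Require Import zify.
Import GRing.Theory.
Set Implicit Arguments. Unset Strict Implicit. Unset Printing Implicit Defensive.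

(** Let A be the edge set of the path 0 - 1 - ... - n.  Every subset of A is a
    priority forest, and every nonempty priority forest F has an edge in A: if
    (p, c) is an edge of F with c minimal and c > p + 1, then p and p + 1 are
    both roots, yet the priority condition puts them in the same tree.  Since
    the Moebius function sums to zero over every nontrivial lower interval,
    induction on #|F| gives mu(0, F) = - sum_(G <= F :&: A) mu(0, G) = 0 when
    F is not contained in A, so mu(0, 1) = - sum_(G <= A) mu(0, G) = 0. *)

Lemma big_option (X : finType) (P : pred (option X)) (F : option X -> int) :
  (\sum_(z | P z) F z =
    (if P None then F None else 0) + \sum_(x | P (Some x)) F (Some x))%R.
Proof.
rewrite (bigID (fun z => z == None)) /=; congr (_ + _)%R.
  case: ifP => PN; last by rewrite big_pred0 // => -[x|]; rewrite ?PN ?andbF.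
  by rewrite (big_pred1 None) // => -[x|] /=; rewrite ?PN ?andbF.
rewrite (reindex_omap Some id) /=; last by case=> [x|] // /andP[].
by apply: eq_bigl => x; rewrite eqxx !andbT.
Qed.

Section BottomMobius.

Variables (X : finType) (Q : pred {set X}).

Definition adjoin_top : pred (option {set X}) :=
  fun a => match a with None => true | Some E => Q E end.

Definition subset_top_le : rel (option {set X}) :=
  fun a b => match b with
             | None => true
             | Some F => match a with None => false | Some E => E \subset F end
             end.

Definition bot_mobius (F : {set X}) : int :=
  mobius_fuel adjoin_top subset_top_le #|F|.+1 (Some set0) (Some F).

Lemma mobius_fuel_subset k m (F : {set X}) : #|F| < k -> #|F| < m ->
  mobius_fuel adjoin_top subset_top_le k (Some set0) (Some F) =
  mobius_fuel adjoin_top subset_top_le m (Some set0) (Some F).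
Proof.
elim: k m F => [|k IHk] [|m] F //= ltFk ltFm.
case: eqP => // _; rewrite sub0set; congr (- _)%R.
apply: eq_bigr => -[G|] /and4P[_ _ sGF neGF] //=.
have ltGF : #|G| < #|F|.
  by apply: proper_card; rewrite properEneq sGF andbT; apply: contraNneq neGF => ->.
by apply: IHk; apply: leq_trans ltGF _.
Qed.

Lemma bot_mobius_fuel k (F : {set X}) : #|F| < k ->
  mobius_fuel adjoin_top subset_top_le k (Some set0) (Some F) = bot_mobius F.
Proof. by move=> ltFk; apply: mobius_fuel_subset. Qed.

Lemma bot_mobiusE (F : {set X}) : F != set0 ->
  bot_mobius F = (- \sum_(G | Q G && (G \proper F)) bot_mobius G)%R.
Proof.
move=> nzF; rewrite {1}/bot_mobius /= sub0set.
have -> : (Some set0 == Some F) = false by apply/eqP => -[/esym/eqP]; apply/negP.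
congr (- _)%R; rewrite big_option add0r.
apply: eq_big => [G | G /and4P[_ _ sGF neGF]].
  by rewrite /= sub0set properEneq [(G != F) && _]andbC.
apply/bot_mobius_fuel/proper_card; rewrite properEneq sGF andbT.
by apply: contraNneq neGF => ->.
Qed.

Lemma sum_bot_mobius_subset (S : {set X}) : Q S -> S != set0 ->
  (\sum_(G | Q G && (G \subset S)) bot_mobius G = 0)%R.
Proof.
move=> QS nzS; rewrite (bigD1 S) /=; last by rewrite QS subxx.
rewrite (bot_mobiusE nzS) addrC; apply/eqP; rewrite subr_eq0; apply/eqP.
by apply: eq_bigl => G; rewrite properEneq -andbA [(G != S) && _]andbC.
Qed.

Lemma mobius_bot_top :
  mobius adjoin_top subset_top_le (Some set0) None =
  (- \sum_(G | Q G) bot_mobius G)%R.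
Proof.
rewrite /mobius /= big_option add0r; congr (- _)%R.
apply: eq_big => [G | G _]; first by rewrite /= sub0set !andbT.
apply: bot_mobius_fuel; rewrite card_option ltnS (leq_trans (max_card G)) //.
rewrite (leq_trans (ltnW (ltn_expl _ (isT : 1 < 2)))) // -cardsT -card_powerset.
exact: max_card.
Qed.

Variable A : {set X}.
Hypothesis Q_subset : forall G : {set X}, G \subset A -> Q G.
Hypothesis Q_meet : forall F : {set X}, Q F -> F != set0 -> F :&: A != set0.

Lemma bot_mobius_eq0 (F : {set X}) : Q F -> ~~ (F \subset A) -> bot_mobius F = 0%R.
Proof.
move: {2}#|F|.+1 (ltnSn #|F|) => k; elim: k F => // k IHk F ltFk QF nsFA.
have nzF : F != set0 by apply: contraNneq nsFA => ->; rewrite sub0set.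
rewrite (bot_mobiusE nzF) (bigID (fun G : {set X} => G \subset A)) /=.
rewrite [X in (_ + X)%R]big1 ?addr0; last first.
  move=> G /andP[/andP[QG ltGF] nsGA]; apply: IHk => //.
  by apply: leq_trans (proper_card ltGF) _.
rewrite (eq_bigl (fun G => Q G && (G \subset F :&: A))); last first.
  move=> G; rewrite subsetI properEneq; case: (Q G) => //=.
  case sGA: (G \subset A); rewrite ?andbF ?andbT //.
  by case: eqP => [eGF | //]; rewrite -eGF sGA in nsFA.
rewrite sum_bot_mobius_subset ?oppr0 ?Q_meet //.
by apply: Q_subset; apply: subsetIr.
Qed.

Lemma sum_bot_mobius_eq0 : A != set0 -> (\sum_(G | Q G) bot_mobius G = 0)%R.
Proof.
move=> nzA; rewrite (bigID (fun G : {set X} => G \subset A)) /=.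
rewrite [X in (_ + X)%R]big1 ?addr0; last by move=> G /andP[]; apply: bot_mobius_eq0.
exact/sum_bot_mobius_subset/nzA/Q_subset.
Qed.

End BottomMobius.

Section PriorityForests.

Variable n : nat.
Implicit Types (E S : edgeset n) (u v w x : vtx n).

Lemma increasing_forestP E :
  reflect ((forall p c, (p, c) \in E -> p < c) /\
           (forall p p' c, (p, c) \in E -> (p', c) \in E -> p = p'))
          (increasing_forest E).
Proof.
apply: (iffP andP) => [[/forallP lt_pc /forallP uniq_p] | [lt_pc uniq_p]]; split.
- by move=> p c Epc; move: (lt_pc p) => /forallP/(_ c)/implyP; apply.
- move=> p p' c Epc Ep'c; apply/eqP.
  by move: (uniq_p p) => /forallP/(_ p')/forallP/(_ c)/implyP; apply; rewrite Epc.
- by apply/forallP => p; apply/forallP => c; apply/implyP; apply: lt_pc.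
- apply/forallP => p; apply/forallP => p'; apply/forallP => c.
  by apply/implyP => /andP[Epc Ep'c]; rewrite (uniq_p _ _ _ Epc Ep'c).
Qed.

Lemma priority_condP E :
  reflect (forall u v u' v', ~~ same_comp E u v -> same_comp E u u' ->
             same_comp E v v' -> u < v -> u' < v')
          (priority_cond E).
Proof.
apply: (iffP forallP) => [prE u v u' v' nuv uu' vv' ltuv | prE u].
  move: (prE u) => /forallP/(_ v)/forallP/(_ u')/forallP/(_ v')/implyP.
  by apply; apply/and4P.
apply/forallP => v; apply/forallP => u'; apply/forallP => v'.
by apply/implyP => /and4P[]; apply: prE.
Qed.

Lemma adj_connect_sym E : connect_sym (adj E).
Proof. by apply: sym_connect_sym => x y; rewrite /adj orbC. Qed.

Lemma same_comp_roots E r r' :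
    (forall p p' c, (p, c) \in E -> (p', c) \in E -> p = p') ->
    (forall q, (q, r) \notin E) -> (forall q, (q, r') \notin E) ->
  same_comp E r r' -> r = r'.
Proof.
move=> uniq_p root_r root_r' rr'.
pose up := [rel a b | (b, a) \in E].
have up_first a : connect up a r -> a != r -> exists2 b, (b, a) \in E & connect up b r.
  case/connectP=> [[|b s] /=]; first by move=> _ ->; rewrite eqxx.
  by case/andP=> Eba pbs -> _; exists b => //; apply/connectP; exists s.
have up_closed : closed (adj E) [pred a | connect up a r].
  apply: (intro_closed (adj_connect_sym E)) => a b /orP[Eab | Eba]; rewrite !inE => ar.
    exact: connect_trans (connect1 _) ar.
  have [ear | nar] := eqVneq a r; first by move: (root_r b); rewrite -ear Eba.
  by have [b' Eb'a b'r] := up_first a ar nar; rewrite (uniq_p _ _ _ Eba Eb'a).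
have := closed_connect up_closed rr'; rewrite !inE connect0 => /esym r'r.
apply/eqP; rewrite eq_sym; apply: contraT => nr'r.
by have [b Ebr' _] := up_first _ r'r nr'r; move: (root_r' b); rewrite Ebr'.
Qed.

Definition path_edges : edgeset n :=
  [set e | nat_of_ord e.2 == (nat_of_ord e.1).+1].

Lemma path_edges_neq0 : 0 < n -> path_edges != set0.
Proof.
move=> n_gt0; apply/set0Pn.
by exists (ord0, Ordinal (n_gt0 : 1 < n.+1)); rewrite inE.
Qed.

Lemma path_edges_cut_closed S w x : S \subset path_edges ->
  nat_of_ord x = w.+1 -> (w, x) \notin S -> closed (adj S) [pred y : vtx n | y <= w].
Proof.
move=> /subsetP sS ex nSwx; apply: (intro_closed (adj_connect_sym S)) => a b.
rewrite !inE /=; case/orP=> [/[dup] Eab /sS | /sS]; rewrite inE /= => /eqP eb aw.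
  2: by lia.
have [ltaw | wa] := ltnP a w; first by lia.
have [ea eb'] : a = w /\ b = x by split; apply: ord_inj; lia.
by move: Eab; rewrite ea eb' (negbTE nSwx).
Qed.

Lemma sub_path_edges_priority S : S \subset path_edges -> priority_forest S.
Proof.
move=> sS; have edgeS p c : (p, c) \in S -> nat_of_ord c = p.+1.
  by move/(subsetP sS); rewrite inE => /eqP.
apply/andP; split.
  apply/increasing_forestP; split=> [p c /edgeS -> // | p p' c /edgeS ec /edgeS ec'].
  by apply: ord_inj; lia.
apply/priority_condP => u v u' v' nuv uu' vv' ltuv.
pose P y := same_comp S u y && (y <= v).
have Pu : P u by rewrite /P /same_comp connect0 ltnW.
have [w /andP[uw wv] maxw] := arg_maxnP (fun y : vtx n => nat_of_ord y) Pu.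
have ltwv : w < v.
  by rewrite ltn_neqAle wv andbT; apply: contraNneq nuv => /ord_inj <-.
have ltw1n : w.+1 < n.+1 by have := ltn_ord v; lia.
pose x : vtx n := Ordinal ltw1n.
have nux : ~~ same_comp S u x.
  by apply/negP => ux; have := maxw x; rewrite /P ux ltwv /= ltnn => /(_ isT).
have nSwx : (w, x) \notin S.
  by apply: contra nux => Swx; apply: connect_trans uw (connect1 _); rewrite /adj Swx.
have cut := path_edges_cut_closed sS (erefl : nat_of_ord x = w.+1) nSwx.
have := closed_connect cut uu'; have := closed_connect cut vv'; rewrite !inE.
have := maxw u Pu; lia.
Qed.

Lemma priority_forest_meet_path_edges E : priority_forest E -> E != set0 ->
  E :&: path_edges != set0.
Proof.
move=> /andP[/increasing_forestP[lt_pc uniq_p] /priority_condP prE] /set0Pn[e0 Ee0].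
have [[p c] Epc minc] := arg_minnP (fun e : vtx n * vtx n => nat_of_ord e.2) Ee0.
have {}Epc : (p, c) \in E by [].
apply/set0Pn; exists (p, c); rewrite !inE Epc /=; apply: contraT => ncp.
have ltpc := lt_pc _ _ Epc.
have ltp1n : p.+1 < n.+1 by have := ltn_ord c; lia.
pose x : vtx n := Ordinal ltp1n.
have orphan (y : vtx n) : y < c -> forall q, (q, y) \notin E.
  by move=> ltyc q; apply/negP => /minc /=; lia.
have px : same_comp E p x.
  apply: contraT => npx; have /= : c < x.
    by apply: prE npx (connect1 _) (connect0 _ _) _; rewrite /adj ?Epc //=.
  lia.
have ltxc : x < c by rewrite /=; lia.
have /(congr1 (@nat_of_ord _)) /= :=
  same_comp_roots uniq_p (orphan p ltpc) (orphan x ltxc) px.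
lia.
Qed.

End PriorityForests.

Theorem corollary5p12 (n : nat) (hn : (1 <= n)%N) :
  mobius (@Pi_elem n) (@Pi_le n) (Pi_bot n) (Pi_top n) = 0%R.
Proof.
change (mobius (adjoin_top (@priority_forest n)) (@subset_top_le _)
          (Some set0) None = 0)%R.
rewrite mobius_bot_top (sum_bot_mobius_eq0 (A := path_edges n)) ?oppr0 //.
- exact: sub_path_edges_priority.
- exact: priority_forest_meet_path_edges.
- exact: path_edges_neq0.
Qed.
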